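(* The $\mathbb F$-algebra $\Delta$ has a presentation by generators $A$, $B$, $\gamma$ and relations \begin{gather*} A^3B-[3]_q A^2BA+[3]_q ABA^2-BA^3 = -(q^2-q^{-2})^2(AB-BA),\\ B^3A-[3]_q B^2AB+[3]_q BAB^2-AB^3 = -(q^2-q^{-2})^2(BA-AB),\\ A^2B^2-B^2A^2+(q^2+q^{-2})(BABA-ABAB) = -(q-q^{-1})^2(AB-BA)\gamma,\\ \gamma A = A\gamma,\qquad \gamma B = B\gamma. \end{gather*}
   Context: Let $\mathbb F$ be a field and fix a nonzero $q\in\mathbb F$ with $q^4\neq 1$. Algebras are associative with 1. The universal Askey--Wilson algebra $\Delta=\Delta_q$ is the $\mathbb F$-algebra with generators $A,B,C$ subject to the relations that each of $A+\frac{qBC-q^{-1}CB}{q^2-q^{-2}}$, $B+\frac{qCA-q^{-1}AC}{q^2-q^{-2}}$, $C+\frac{qAB-q^{-1}BA}{q^2-q^{-2}}$ is central in $\Delta$. Define $\alpha,\beta,\gamma$ by multiplying these three central elements (in this order) by $q+q^{-1}$; so e.g. $C+\frac{qAB-q^{-1}BA}{q^2-q^{-2}}=\frac{\gamma}{q+q^{-1}}$. Here $[n]_q=\frac{q^n-q^{-n}}{q-q^{-1}}$. *)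

From HB Require Import structures.
From mathcomp Require Import all_boot all_order all_algebra.
Set Implicit Arguments. Unset Strict Implicit. Unset Printing Implicit Defensive.
Import GRing.Theory.
Local Open Scope ring_scope.

Definition qint (F : fieldType) (q : F) (n : nat) : F :=
  (q ^+ n - q ^- n) / (q - q^-1).

Definition commutes3 (F : fieldType) (R : algType F) (z x y w : R) : Prop :=
  z * x = x * z /\ z * y = y * z /\ z * w = w * z.

Definition centA (F : fieldType) (q : F) (R : algType F) (A B C : R) : R :=
  A + (q ^+ 2 - q ^- 2)^-1 *: (q *: (B * C) - q^-1 *: (C * B)).
Definition centB (F : fieldType) (q : F) (R : algType F) (A B C : R) : R :=
  B + (q ^+ 2 - q ^- 2)^-1 *: (q *: (C * A) - q^-1 *: (A * C)).
Definition centC (F : fieldType) (q : F) (R : algType F) (A B C : R) : R :=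
  C + (q ^+ 2 - q ^- 2)^-1 *: (q *: (A * B) - q^-1 *: (B * A)).

(* Defining relations of the universal Askey-Wilson algebra, for a triple
   (A, B, C) of elements of an F-algebra R: each of the three elements
   commutes with all generators A, B, C (i.e. is central in the algebra they
   generate subject to these relations). *)
Definition DeltaRel (F : fieldType) (q : F) (R : algType F) (A B C : R) : Prop :=
  commutes3 (centA q A B C) A B C /\
  commutes3 (centB q A B C) A B C /\
  commutes3 (centC q A B C) A B C.

Definition gammaE (F : fieldType) (q : F) (R : algType F) (A B C : R) : R :=
  (q + q^-1) *: centC q A B C.

Definition Cof (F : fieldType) (q : F) (R : algType F) (A B g : R) : R :=
  (q + q^-1)^-1 *: g - (q ^+ 2 - q ^- 2)^-1 *: (q *: (A * B) - q^-1 *: (B * A)).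

Definition NewRel (F : fieldType) (q : F) (R : algType F) (A B g : R) : Prop :=
  [/\ A ^+ 3 * B - qint q 3 *: (A ^+ 2 * B * A) + qint q 3 *: (A * B * A ^+ 2)
        - B * A ^+ 3 = - ((q ^+ 2 - q ^- 2) ^+ 2) *: (A * B - B * A),
      B ^+ 3 * A - qint q 3 *: (B ^+ 2 * A * B) + qint q 3 *: (B * A * B ^+ 2)
        - A * B ^+ 3 = - ((q ^+ 2 - q ^- 2) ^+ 2) *: (B * A - A * B),
      A ^+ 2 * B ^+ 2 - B ^+ 2 * A ^+ 2 + (q ^+ 2 + q ^- 2) *: (B * A * B * A - A * B * A * B)
        = - ((q - q^-1) ^+ 2) *: ((A * B - B * A) * g),
      g * A = A * g &
      g * B = B * g].

From HB Require Import structures.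
From mathcomp Require Import all_boot all_order all_algebra.
From mathcomp Require Import ring.
Import GRing.Theory.
Local Open Scope ring_scope.
Set Implicit Arguments.
Unset Strict Implicit.
Unset Printing Implicit Defensive.

(* Solving the definition of gamma for C gives C = gamma/(q + q^-1) -
   (qAB - q^-1 BA)/(q^2 - q^-2), so the two substitutions are mutually inverse
   and everything reduces to comparing the relations of Delta, written in A, B,
   gamma, with the new ones.  The third central element is gamma/(q + q^-1),
   so it is central iff gamma commutes with A and B.  Once gamma commutes with
   A and B, each of the commutators [beta, A], [alpha, B], [alpha, A], [beta, B]
   is a nonzero multiple of the difference of the two sides of the first,
   second, third and third new relation respectively; commutation with C is then
   automatic, C being a polynomial in A, B, gamma.  These commutator formulas are
   identities between noncommutative polynomials with coefficients rational in
   q, checked by reflection: both sides are expanded into words, gamma is moved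
   to the end of every word, and the coefficients are compared with [field]. *)

Section NoncommutativePolynomials.
Variable F : fieldType.

Inductive ncterm :=
  | NCAtom of nat | NCZero | NCOne
  | NCAdd of ncterm & ncterm | NCOpp of ncterm | NCMul of ncterm & ncterm
  | NCScale of F & ncterm | NCExp of ncterm & nat.

(* A normal form is a list of monomials (coefficient, word); the words are
   sequences of atom indices and the list is not assumed to be reduced. *)
Local Notation ncpoly := (seq (F * seq nat)).

Definition ncpoly_mul (p1 p2 : ncpoly) : ncpoly :=
  foldr (fun m acc => map (fun m2 => (m.1 * m2.1, m.2 ++ m2.2)) p2 ++ acc) [::] p1.

Fixpoint ncnorm (t : ncterm) : ncpoly :=
  match t with
  | NCAtom i => [:: (1, [:: i])]
  | NCZero => [::]
  | NCOne => [:: (1, [::])]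
  | NCAdd t1 t2 => ncnorm t1 ++ ncnorm t2
  | NCOpp t1 => map (fun m => (- m.1, m.2)) (ncnorm t1)
  | NCMul t1 t2 => ncpoly_mul (ncnorm t1) (ncnorm t2)
  | NCScale k t1 => map (fun m => (k * m.1, m.2)) (ncnorm t1)
  | NCExp t1 n => iter n (ncpoly_mul (ncnorm t1)) [:: (1, [::])]
  end.

(* Word equality and the central reordering are spelled with [eqn] so that
   they reduce under [lazy] without unfolding the [eqType] structure. *)
Fixpoint eq_word (w1 w2 : seq nat) : bool :=
  match w1, w2 with
  | [::], [::] => true
  | i1 :: w1', i2 :: w2' => eqn i1 i2 && eq_word w1' w2'
  | _, _ => false
  end.

Definition coef (p : ncpoly) (w : seq nat) : F :=
  foldr (fun m acc => if eq_word m.2 w then m.1 + acc else acc) 0 p.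

Fixpoint mem_word (w : seq nat) (ws : seq (seq nat)) : bool :=
  if ws is w' :: ws' then eq_word w w' || mem_word w ws' else false.

Definition undup_words (ws : seq (seq nat)) : seq (seq nat) :=
  foldr (fun w acc => if mem_word w acc then acc else w :: acc) [::] ws.

Definition same_coefs (p1 p2 : ncpoly) : Prop :=
  foldr (fun w P => coef p1 w = coef p2 w /\ P) True
    (undup_words (map snd (p1 ++ p2))).

Definition move_last (c : nat) (w : seq nat) : seq nat :=
  filter (fun i => ~~ eqn i c) w ++ filter (fun i => eqn i c) w.

Definition move_last_poly (c : nat) (p : ncpoly) : ncpoly :=
  map (fun m => (m.1, move_last c m.2)) p.

Lemma eq_wordE w1 w2 : eq_word w1 w2 = (w1 == w2).
Proof. by elim: w1 w2 => [|i1 w1 IH] [|i2 w2] //=; rewrite IH eqseq_cons. Qed.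

Lemma mem_wordE w ws : mem_word w ws = (w \in ws).
Proof. by elim: ws => [|w' ws IH] //=; rewrite inE eq_wordE IH. Qed.

Lemma mem_undup_words ws : {subset ws <= undup_words ws}.
Proof.
elim: ws => [|w ws IH] //= x; rewrite inE => /orP[/eqP->|xws].
  by case: ifP => [|_]; rewrite ?mem_wordE // inE eqxx.
by case: ifP => _; rewrite ?inE IH ?orbT.
Qed.

Lemma same_coefsP p1 p2 w : same_coefs p1 p2 ->
  w \in map snd (p1 ++ p2) -> coef p1 w = coef p2 w.
Proof.
rewrite /same_coefs => + /mem_undup_words.
elim: (undup_words _) => [|w' ws IH] //= [e1 e2].
by rewrite inE => /orP[/eqP->|]; last exact: IH.
Qed.

Variables (R : algType F) (env : seq R).

Definition ev_word (w : seq nat) : R := foldr (fun i acc => nth 0 env i * acc) 1 w.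

Definition ev_ncpoly (p : ncpoly) : R := foldr (fun m acc => m.1 *: ev_word m.2 + acc) 0 p.

Fixpoint ev_ncterm (t : ncterm) : R :=
  match t with
  | NCAtom i => nth 0 env i
  | NCZero => 0
  | NCOne => 1
  | NCAdd t1 t2 => ev_ncterm t1 + ev_ncterm t2
  | NCOpp t1 => - ev_ncterm t1
  | NCMul t1 t2 => ev_ncterm t1 * ev_ncterm t2
  | NCScale k t1 => k *: ev_ncterm t1
  | NCExp t1 n => ev_ncterm t1 ^+ n
  end.

Lemma ev_word_cat w1 w2 : ev_word (w1 ++ w2) = ev_word w1 * ev_word w2.
Proof. by elim: w1 => [|i w IH] /=; rewrite ?mul1r // IH mulrA. Qed.

Lemma ev_ncpoly_cat p1 p2 : ev_ncpoly (p1 ++ p2) = ev_ncpoly p1 + ev_ncpoly p2.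
Proof. by elim: p1 => [|m p IH] /=; rewrite ?add0r // IH addrA. Qed.

Lemma ev_ncpoly_opp p : ev_ncpoly (map (fun m => (- m.1, m.2)) p) = - ev_ncpoly p.
Proof. by elim: p => [|m p IH] /=; rewrite ?oppr0 // IH opprD scaleNr. Qed.

Lemma ev_ncpoly_scale k p :
  ev_ncpoly (map (fun m => (k * m.1, m.2)) p) = k *: ev_ncpoly p.
Proof. by elim: p => [|m p IH] /=; rewrite ?scaler0 // IH scalerDr scalerA. Qed.

Lemma ev_ncpoly_mul p1 p2 : ev_ncpoly (ncpoly_mul p1 p2) = ev_ncpoly p1 * ev_ncpoly p2.
Proof.
elim: p1 => [|m p1 IH] /=; first by rewrite mul0r.
rewrite ev_ncpoly_cat IH mulrDl; congr (_ + _).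
elim: p2 {IH} => [|m2 p2 IH] /=; first by rewrite mulr0.
rewrite IH mulrDr ev_word_cat; congr (_ + _).
by rewrite -scalerAl -scalerAr scalerA.
Qed.

Lemma ev_ncnorm t : ev_ncpoly (ncnorm t) = ev_ncterm t.
Proof.
elim: t => [i||| t1 IH1 t2 IH2 | t1 IH1 | t1 IH1 t2 IH2 | k t1 IH1 | t1 IH1 n] /=.
- by rewrite scale1r addr0 mulr1.
- by [].
- by rewrite scale1r addr0.
- by rewrite ev_ncpoly_cat IH1 IH2.
- by rewrite ev_ncpoly_opp IH1.
- by rewrite ev_ncpoly_mul IH1 IH2.
- by rewrite ev_ncpoly_scale IH1.
- elim: n => [|n IH] /=; first by rewrite expr0 scale1r addr0.
  by rewrite ev_ncpoly_mul IH IH1 exprS.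
Qed.

Lemma ev_ncpoly_coef p ws : uniq ws -> {subset map snd p <= ws} ->
  ev_ncpoly p = \sum_(w <- ws) coef p w *: ev_word w.
Proof.
move=> uws; elim: p => [|m p IH] /= sub.
  by rewrite big1 // => w _; rewrite scale0r.
rewrite IH => [|w wp]; last by apply: sub; rewrite inE wp orbT.
have -> : m.1 *: ev_word m.2 = \sum_(w <- ws) (if m.2 == w then m.1 else 0) *: ev_word w.
  rewrite (bigD1_seq m.2) ?sub ?inE ?eqxx //= big1 ?addr0 // => w.
  by rewrite eq_sym => /negbTE ->; rewrite scale0r.
rewrite -big_split; apply: eq_bigr => w _.
by rewrite /= eq_wordE -scalerDl; case: eqP => _; rewrite ?add0r.
Qed.

Lemma same_coefs_ev p1 p2 : same_coefs p1 p2 -> ev_ncpoly p1 = ev_ncpoly p2.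
Proof.
move=> e12; pose ws := undup (map snd (p1 ++ p2)).
have sub1 : {subset map snd p1 <= ws}.
  by move=> w wp; rewrite mem_undup map_cat mem_cat wp.
have sub2 : {subset map snd p2 <= ws}.
  by move=> w wp; rewrite mem_undup map_cat mem_cat wp orbT.
rewrite (ev_ncpoly_coef (undup_uniq _) sub1) (ev_ncpoly_coef (undup_uniq _) sub2).
rewrite big_seq [RHS]big_seq; apply: eq_bigr => w.
by rewrite mem_undup => /(same_coefsP e12) ->.
Qed.

Lemma ncterm_eq t1 t2 : same_coefs (ncnorm t1) (ncnorm t2) -> ev_ncterm t1 = ev_ncterm t2.
Proof. by move/same_coefs_ev; rewrite !ev_ncnorm. Qed.

Section CentralAtom.
Variable c : nat.
Hypothesis central_c : forall i, GRing.comm (nth 0 env c) (nth 0 env i).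

Lemma comm_ev_word w : GRing.comm (nth 0 env c) (ev_word w).
Proof. by elim: w => [|i w IH] /=; [exact: commr1 | exact: commrM]. Qed.

Lemma ev_word_move_last w : ev_word (move_last c w) = ev_word w.
Proof.
rewrite /move_last ev_word_cat; elim: w => [|i w IH] /=; first by rewrite mul1r.
case: (@eqnP i c) => [->|_] /=; last by rewrite -mulrA IH.
by rewrite mulrA -comm_ev_word -mulrA IH.
Qed.

Lemma ev_move_last_poly p : ev_ncpoly (move_last_poly c p) = ev_ncpoly p.
Proof. by elim: p => [|m p IH] //=; rewrite IH ev_word_move_last. Qed.

Lemma ncterm_eq_central t1 t2 :
  same_coefs (move_last_poly c (ncnorm t1)) (move_last_poly c (ncnorm t2)) ->
  ev_ncterm t1 = ev_ncterm t2.
Proof. by move/same_coefs_ev; rewrite !ev_move_last_poly !ev_ncnorm. Qed.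

End CentralAtom.
End NoncommutativePolynomials.

Ltac ncterm_atom_index env x :=
  lazymatch env with
  | x :: _ => constr:(0%N)
  | _ :: ?env' => let n := ncterm_atom_index env' x in constr:(S n)
  end.

Ltac reify_ncterm F env x :=
  lazymatch x with
  | @GRing.add _ ?a ?b =>
      let ra := reify_ncterm F env a in let rb := reify_ncterm F env b in
      constr:(@NCAdd F ra rb)
  | @GRing.opp _ ?a => let ra := reify_ncterm F env a in constr:(@NCOpp F ra)
  | @GRing.mul _ ?a ?b =>
      let ra := reify_ncterm F env a in let rb := reify_ncterm F env b in
      constr:(@NCMul F ra rb)
  | @GRing.scale _ _ ?k ?a => let ra := reify_ncterm F env a in constr:(@NCScale F k ra)
  | @GRing.exp _ ?a ?n => let ra := reify_ncterm F env a in constr:(@NCExp F ra n)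
  | @GRing.zero _ => constr:(@NCZero F)
  | @GRing.one _ => constr:(@NCOne F)
  | _ => let n := ncterm_atom_index env x in constr:(@NCAtom F n)
  end.

Ltac reify_ncgoal F env :=
  lazymatch goal with
  | |- ?l = ?r =>
      let tl := reify_ncterm F env l in let tr := reify_ncterm F env r in
      change (ev_ncterm env tl = ev_ncterm env tr)
  end.

Ltac split_coefs :=
  lazy beta iota zeta delta [same_coefs coef move_last_poly move_last ncnorm
    ncpoly_mul undup_words mem_word eq_word map cat foldr iter fst snd eqn negb
    andb orb filter];
  repeat match goal with |- _ /\ _ => split end; try exact: I.

Ltac nc_ring F env :=
  reify_ncgoal F env; apply: ncterm_eq; split_coefs.

Ltac nc_ring_central F env c central_c :=
  reify_ncgoal F env; apply: (ncterm_eq_central (c := c) central_c); split_coefs.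

Section Commutation.
Variables (F : fieldType) (R : algType F).

Definition commutator (x y : R) : R := x * y - y * x.

Lemma commrZ (k : F) (x y : R) : GRing.comm x y -> GRing.comm x (k *: y).
Proof. by rewrite /GRing.comm -scalerAl -scalerAr => ->. Qed.

Lemma comm_iff_eq (k : F) (z x l r : R) : k != 0 ->
  commutator z x = k *: (l - r) -> (GRing.comm z x <-> l = r).
Proof.
move=> k_neq0; rewrite /commutator /GRing.comm => zx; split=> [zxE | lr].
  move: zx; rewrite zxE subrr => /esym/eqP.
  by rewrite scaler_eq0 (negbTE k_neq0) subr_eq0 => /eqP.
by apply/eqP; rewrite -subr_eq0 zx lr subrr scaler0.
Qed.

End Commutation.

Ltac comm_closure :=
  repeat first [assumption | apply: commrD | apply: commrN | apply: commrZ | apply: commrM].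

Section AskeyWilson.
Variables (F : fieldType) (q : F).
Hypotheses (q_neq0 : q != 0) (q4_neq1 : q ^+ 4 != 1).

Lemma qq_sqr_sub1_neq0 : (q * q) ^+ 2 - 1 != 0.
Proof. by rewrite -expr2 -exprM subr_eq0. Qed.

Lemma qq_sub1_add1_neq0 : q * q - 1 != 0 /\ q * q + 1 != 0.
Proof.
have := qq_sqr_sub1_neq0; rewrite (_ : _ - 1 = (q * q - 1) * (q * q + 1)); last by ring.
by rewrite mulf_eq0 negb_or => /andP.
Qed.

Let qq_sub1_neq0 := proj1 qq_sub1_add1_neq0.
Let qq_add1_neq0 := proj2 qq_sub1_add1_neq0.

Lemma qDqV_neq0 : q + q^-1 != 0.
Proof.
have -> : q + q^-1 = (q * q + 1) / q by field.
by rewrite mulf_neq0 ?invr_eq0 ?qq_add1_neq0.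
Qed.

Lemma q2_sub_qm2_neq0 : q ^+ 2 - q ^- 2 != 0.
Proof.
have -> : q ^+ 2 - q ^- 2 = ((q * q) ^+ 2 - 1) / (q * q) by field.
by rewrite mulf_neq0 ?invr_eq0 ?mulf_neq0 ?qq_sqr_sub1_neq0.
Qed.

Ltac field_q := field; by rewrite ?q_neq0 ?qq_sqr_sub1_neq0 ?qq_sub1_neq0 ?qq_add1_neq0.

Variable R : algType F.

Definition dolan_grady_defect (X Y : R) : R :=
  X ^+ 3 * Y - qint q 3 *: (X ^+ 2 * Y * X) + qint q 3 *: (X * Y * X ^+ 2) - Y * X ^+ 3
  - - ((q ^+ 2 - q ^- 2) ^+ 2) *: (X * Y - Y * X).

Definition quartic_defect (A B g : R) : R :=
  A ^+ 2 * B ^+ 2 - B ^+ 2 * A ^+ 2 + (q ^+ 2 + q ^- 2) *: (B * A * B * A - A * B * A * B)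
  - - ((q - q^-1) ^+ 2) *: ((A * B - B * A) * g).

Lemma Cof_gammaE (A B C : R) : Cof q A B (gammaE q A B C) = C.
Proof. rewrite /gammaE /centC /Cof; nc_ring F [:: A; B; C]; field_q. Qed.

Lemma gammaE_Cof (A B g : R) : gammaE q A B (Cof q A B g) = g.
Proof. rewrite /gammaE /centC /Cof; nc_ring F [:: A; B; g]; field_q. Qed.

Lemma centC_Cof (A B g : R) : centC q A B (Cof q A B g) = (q + q^-1)^-1 *: g.
Proof. rewrite /centC /Cof; nc_ring F [:: A; B; g]; field_q. Qed.

Section CentralGamma.
Variables (A B g : R).
Hypotheses (gA : GRing.comm g A) (gB : GRing.comm g B).

Let g_central i : GRing.comm (nth 0 [:: A; B; g] 2) (nth 0 [:: A; B; g] i).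
Proof. by case: i => [|[|[|i]]] //=; rewrite nth_nil; apply: commr0. Qed.

Let k : F := (q ^+ 2 - q ^- 2)^-2.

Lemma commutator_centA_A :
  commutator (centA q A B (Cof q A B g)) A = - k *: quartic_defect A B g.
Proof.
rewrite /commutator /centA /Cof /quartic_defect /k.
nc_ring_central F [:: A; B; g] 2%N g_central; field_q.
Qed.

Lemma commutator_centB_B :
  commutator (centB q A B (Cof q A B g)) B = k *: quartic_defect A B g.
Proof.
rewrite /commutator /centB /Cof /quartic_defect /k.
nc_ring_central F [:: A; B; g] 2%N g_central; field_q.
Qed.

Lemma commutator_centB_A :
  commutator (centB q A B (Cof q A B g)) A = - k *: dolan_grady_defect A B.
Proof.
rewrite /commutator /centB /Cof /dolan_grady_defect /qint /k.
nc_ring_central F [:: A; B; g] 2%N g_central; field_q.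
Qed.

Lemma commutator_centA_B :
  commutator (centA q A B (Cof q A B g)) B = - k *: dolan_grady_defect B A.
Proof.
rewrite /commutator /centA /Cof /dolan_grady_defect /qint /k.
nc_ring_central F [:: A; B; g] 2%N g_central; field_q.
Qed.

End CentralGamma.

Lemma comm_Cof (z A B g : R) :
  GRing.comm z A -> GRing.comm z B -> GRing.comm z g -> GRing.comm z (Cof q A B g).
Proof. by move=> *; rewrite /Cof; comm_closure. Qed.

Lemma comm_centA (z A B C : R) :
  GRing.comm z A -> GRing.comm z B -> GRing.comm z C -> GRing.comm z (centA q A B C).
Proof. by move=> *; rewrite /centA; comm_closure. Qed.

Lemma comm_centB (z A B C : R) :
  GRing.comm z A -> GRing.comm z B -> GRing.comm z C -> GRing.comm z (centB q A B C).
Proof. by move=> *; rewrite /centB; comm_closure. Qed.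

Lemma comm_centC_Cof (A B g x : R) :
  GRing.comm (centC q A B (Cof q A B g)) x <-> GRing.comm g x.
Proof.
rewrite centC_Cof; split=> [/commr_sym gx | /commr_sym gx]; apply: commr_sym.
  by rewrite -[g](scalerK (invr_neq0 qDqV_neq0)); apply: commrZ.
exact: commrZ.
Qed.

Lemma DeltaRel_Cof (A B g : R) : DeltaRel q A B (Cof q A B g) <-> NewRel q A B g.
Proof.
have k_neq0 : (q ^+ 2 - q ^- 2)^-2 != 0 by rewrite invr_eq0 expf_neq0 ?q2_sub_qm2_neq0.
have nk_neq0 : - (q ^+ 2 - q ^- 2)^-2 != 0 by rewrite oppr_eq0.
split=> [[[aA [aB _]] [[bA [_ _]] [cA [cB _]]]] | [r1 r2 r3 gA gB]].
  have gA : GRing.comm g A by apply/(comm_centC_Cof A B).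
  have gB : GRing.comm g B by apply/(comm_centC_Cof A B).
  split=> //.
  - exact/(comm_iff_eq nk_neq0 (commutator_centB_A gA gB)).
  - exact/(comm_iff_eq nk_neq0 (commutator_centA_B gA gB)).
  - exact/(comm_iff_eq nk_neq0 (commutator_centA_A gA gB)).
have aA := (comm_iff_eq nk_neq0 (commutator_centA_A gA gB)).2 r3.
have aB := (comm_iff_eq nk_neq0 (commutator_centA_B gA gB)).2 r2.
have bA := (comm_iff_eq nk_neq0 (commutator_centB_A gA gB)).2 r1.
have bB := (comm_iff_eq k_neq0 (commutator_centB_B gA gB)).2 r3.
have gC := comm_Cof gA gB (commr_refl g).
have aC := comm_Cof aA aB (commr_sym (comm_centA gA gB gC)).
have bC := comm_Cof bA bB (commr_sym (comm_centB gA gB gC)).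
by do !split=> //; apply/(comm_centC_Cof A B g).
Qed.

End AskeyWilson.

Theorem theorem2p2 (F : fieldType) (q : F) (hq0 : q != 0) (hq4 : q ^+ 4 != 1)
    (R : algType F) :
  (forall A B C : R, DeltaRel q A B C ->
     NewRel q A B (gammaE q A B C) /\ Cof q A B (gammaE q A B C) = C) /\
  (forall A B g : R, NewRel q A B g ->
     DeltaRel q A B (Cof q A B g) /\ gammaE q A B (Cof q A B g) = g).
Proof.
have CofK := Cof_gammaE hq0 hq4 (R := R).
split=> [A B C | A B g].
  by rewrite -{1}(CofK A B C) (DeltaRel_Cof hq0 hq4) CofK.
by rewrite -(DeltaRel_Cof hq0 hq4) (gammaE_Cof hq0 hq4).
Qed.
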